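(* Let $A$ be a combination matrix of the weakly-connected form described in the context, with $W=T_{SR}(I-T_{RR})^{-1}$, and let $\mathcal{A}=A\otimes I_M$ and $\mathcal{W}=W\otimes I_M$. For vectors $w_1^\star,\dots,w_S^\star\in\mathbb{R}^M$ (the Pareto solutions of the sub-networks of group $S$) let $\omega^\star=\mathrm{col}\{\mathbb{1}_{N_1}\otimes w_1^\star,\dots,\mathbb{1}_{N_S}\otimes w_S^\star\}\in\mathbb{R}^{N_{gS}M}$, $\omega^\bullet=\mathcal{W}^{\mathsf T}\omega^\star\in\mathbb{R}^{N_{gR}M}$ and $\omega_\infty=\mathrm{col}\{\omega^\star,\omega^\bullet\}\in\mathbb{R}^{NM}$. Then $\omega_\infty=\mathcal{A}^{\mathsf T}\omega_\infty$. Moreover, $\omega_\infty$ is the unique solution $x\in\mathbb{R}^{NM}$ of $x=\mathcal{A}^{\mathsf T}x$ whose first $N_{gS}M$ entries equal $\omega^\star$.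
   Context: $N$ agents are partitioned into sub-networks $1,\dots,S+R$ ($S\ge 1$), sub-network $j$ having $N_j$ agents; agents of sub-networks $1,\dots,S$ (group $S$, $N_{gS}=N_1+\cdots+N_S$ agents) come first, then those of sub-networks $S+1,\dots,S+R$ (group $R$, $N_{gR}$ agents). The combination matrix $A=[a_{\ell k}]$ is nonnegative, left-stochastic ($A^{\mathsf T}\mathbb{1}=\mathbb{1}$), and of the block form $A=\begin{bmatrix}T_{SS}&T_{SR}\\0&T_{RR}\end{bmatrix}$, where $T_{SS}=\mathrm{blockdiag}\{A_1,\dots,A_S\}$ with each $A_s\in\mathbb{R}^{N_s\times N_s}$ left-stochastic and primitive, and $T_{RR}$ is block upper triangular with diagonal blocks $A_{S+1},\dots,A_{S+R}$; each $A_r$ ($r>S$) is the nonnegative irreducible matrix of weights internal to a connected sub-network $r$ that receives information from outside it, so that at least one column of $A_r$ sums to strictly less than one. (Under these conditions $I-T_{RR}$ is invertible.) $\mathrm{col}\{\cdot\}$ denotes vertical stacking and $\otimes$ the Kronecker product. *)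

From HB Require Import structures.
From mathcomp Require Import all_boot all_order all_algebra.
From mathcomp Require Export mxtens.
Set Implicit Arguments. Unset Strict Implicit. Unset Printing Implicit Defensive.
Import Order.TTheory GRing.Theory Num.Theory.
Local Open Scope ring_scope.

Section Defs.
Variable R : realFieldType.

Definition nonnegmx m n (A : 'M[R]_(m, n)) := forall i j, 0 <= A i j.

Definition left_stochastic n (A : 'M[R]_n) :=
  nonnegmx A /\ A^T *m (const_mx 1 : 'cV[R]_n) = const_mx 1.

Definition mxpow n (A : 'M[R]_n) (k : nat) : 'M[R]_n := iter k (mulmx A) 1%:M.

Definition primitive n (A : 'M[R]_n) :=
  nonnegmx A /\ exists k, forall i j, 0 < mxpow A k i j.

Definition irreducible n (A : 'M[R]_n) :=
  nonnegmx A /\ forall i j, exists k, 0 < mxpow A k i j.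

(* Kronecker product (agent-major ordering: (i,j) |-> i * p + j) *)
Definition kron m n p q (A : 'M[R]_(m, n)) (B : 'M[R]_(p, q)) : 'M[R]_(m * p, n * q)
  := tensmx A B.


Lemma cast_sum_mul k (Ns : 'I_k -> nat) (M : nat) :
  (\sum_(s < k) (Ns s * M) = (\sum_(s < k) Ns s) * M)%N.
Proof. by rewrite big_distrl. Qed.

Definition omega_star k (Ns : 'I_k -> nat) (M : nat) (w : 'I_k -> 'cV[R]_M)
  : 'cV[R]_((\sum_(s < k) Ns s) * M) :=
  castmx (cast_sum_mul Ns M, erefl 1%N)
    (\mxcol_(s < k) kron (const_mx 1 : 'cV[R]_(Ns s)) (w s)).

Definition col_stack a b M (x : 'cV[R]_(a * M)) (y : 'cV[R]_(b * M))
  : 'cV[R]_((a + b) * M) :=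
  castmx (esym (mulnDl a b M), erefl 1%N) (col_mx x y).

Lemma prefix_le a b M : (a * M <= (a + b) * M)%N.
Proof. exact: leq_mul (leq_addr b a) (leqnn M). Qed.

Definition prefix_eq a b M (x : 'cV[R]_((a + b) * M)) (y : 'cV[R]_(a * M)) :=
  forall i : 'I_(a * M), x (widen_ord (prefix_le a b M) i) 0 = y i 0.

End Defs.

(* The equation x = 𝒜ᵀx splits along the two groups: its S-part says that each
   primitive block A_s fixes constant vectors, which holds since A_s is left
   stochastic, and its R-part reads (I - T_RRᵀ) x_R = T_SRᵀ x_S, which has exactly
   one solution because I - T_RR is invertible.  Invertibility is the real content:
   a nonzero v with v T_RR = v would make the set of coordinates where |v| is
   maximal closed under taking predecessors, with all its columns summing to one;
   irreducibility forces that set to contain a whole diagonal block of minimal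
   index, and block triangularity then contradicts the column of that block whose
   sum is below one. *)
From HB Require Import structures.
From mathcomp Require Import all_boot all_order all_algebra.
Set Implicit Arguments. Unset Strict Implicit. Unset Printing Implicit Defensive.
Import Order.TTheory GRing.Theory Num.Theory.
Local Open Scope ring_scope.

Section Unvec.
Variable R : realFieldType.

(* A vector of R^{nM} in agent-major order, read as an n x M matrix whose i-th
   row is the block of agent i. *)
Definition unvec n M (x : 'cV[R]_(n * M)) : 'M[R]_(n, M) :=
  \matrix_(i, a) x (mxtens_index (i, a)) 0.

Lemma unvec_inj n M : injective (@unvec n M).
Proof.
move=> x y /matrixP Exy; apply/matrixP => k j; rewrite [j]ord1.
by case: (mxtens_indexP k) => i a; have := Exy i a; rewrite !mxE.
Qed.

Lemma unvec_trkron1_mul n m M (P : 'M[R]_(n, m)) (x : 'cV[R]_(n * M)) :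
  unvec ((kron P (1%:M : 'M_M))^T *m x) = P^T *m unvec x.
Proof.
apply/matrixP => j a; rewrite !mxE.
rewrite (reindex (@mxtens_index n M)) /=; last first.
  by exists (@mxtens_unindex n M) => k _; [apply: mxtens_indexK | apply: mxtens_unindexK].
pose F i b := (kron P 1%:M)^T (mxtens_index (j, a)) (mxtens_index (i, b)) *
  x (mxtens_index (i, b)) 0.
rewrite (eq_bigr (fun p : 'I_n * 'I_M => F p.1 p.2)); last by case.
rewrite -(pair_bigA _ F) /=.
apply: eq_bigr => i _; rewrite (bigD1 a) //= big1 ?addr0 /F.
  by rewrite !mxE !mxtens_indexK /= eqxx mulr1.
by move=> b nba; rewrite /F !mxE !mxtens_indexK /= (negbTE nba) mulr0 mul0r.
Qed.

Lemma unvec_col_stack a b M (x : 'cV[R]_(a * M)) (y : 'cV[R]_(b * M)) :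
  unvec (col_stack x y) = col_mx (unvec x) (unvec y).
Proof.
apply/matrixP => i c; rewrite mxE castmxE /=.
case: (split_ordP i) => k ->.
- rewrite (col_mxEu (unvec x)) [RHS]mxE.
  have -> : cast_ord (esym (esym (mulnDl a b M))) (mxtens_index (lshift b k, c))
     = lshift (b * M) (mxtens_index (k, c)) by apply: val_inj.
  by rewrite col_mxEu cast_ord_id.
- rewrite (col_mxEd (unvec x)) [RHS]mxE.
  have -> : cast_ord (esym (esym (mulnDl a b M))) (mxtens_index (rshift a k, c))
     = rshift (a * M) (mxtens_index (k, c)).
    by apply: val_inj => /=; rewrite mulnDl addnA.
  by rewrite col_mxEd cast_ord_id.
Qed.

Lemma unvec_kron1_block_upper n1 n2 M (P : 'M[R]_n1) (Q : 'M[R]_(n1, n2))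
    (T : 'M[R]_n2) (x : 'cV[R]_(n1 * M)) (y : 'cV[R]_(n2 * M)) :
  unvec ((kron (block_mx P Q 0 T) (1%:M : 'M_M))^T *m col_stack x y) =
  col_mx (P^T *m unvec x) (Q^T *m unvec x + T^T *m unvec y).
Proof.
rewrite unvec_trkron1_mul unvec_col_stack tr_block_mx trmx0 mul_block_col.
by rewrite mul0mx addr0.
Qed.

Lemma col_stackP a b M (z : 'cV[R]_((a + b) * M)) :
  exists u d, z = col_stack u d.
Proof.
set z' := castmx (mulnDl a b M, erefl 1%N) z.
exists (usubmx z'), (dsubmx z').
by rewrite /col_stack vsubmxK /z' castmx_comp castmx_id.
Qed.

Lemma prefix_eq_col_stack a b M (x : 'cV[R]_(a * M)) (y : 'cV[R]_(b * M)) :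
  prefix_eq (col_stack x y) x.
Proof.
move=> i; rewrite castmxE /=.
have -> : cast_ord (esym (esym (mulnDl a b M))) (widen_ord (prefix_le a b M) i)
     = lshift (b * M) i by apply: val_inj.
by rewrite cast_ord_id col_mxEu.
Qed.

Lemma prefix_eq_col_stackE a b M (u s : 'cV[R]_(a * M)) (d : 'cV[R]_(b * M)) :
  prefix_eq (col_stack u d) s -> u = s.
Proof.
move=> u_pre; apply/matrixP => i j; rewrite [j]ord1 -u_pre.
by rewrite prefix_eq_col_stack.
Qed.

End Unvec.

Section Blocks.
Variable R : realFieldType.

Lemma mxcol_Rank k (p_ : 'I_k -> nat) n (V : forall i, 'M[R]_(p_ i, n)) s
    (j : 'I_(p_ s)) c :
  (\mxcol_i V i) (tagnat.Rank s j) c = V s j c.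
Proof.
by have := congr1 (fun X : 'M[R]_(p_ s, n) => X j c) (mxcolK V s); rewrite !mxE.
Qed.

Lemma mxblock_Rank k (p_ : 'I_k -> nat) (V : forall i j, 'M[R]_(p_ i, p_ j)) s t
    (j : 'I_(p_ s)) (l : 'I_(p_ t)) :
  (\mxblock_(i, j) V i j) (tagnat.Rank s j) (tagnat.Rank t l) = V s t j l.
Proof.
by have := congr1 (fun X : 'M[R]_(p_ s, p_ t) => X j l) (mxblockK V s t); rewrite !mxE.
Qed.

Lemma sum_Rank n (p_ : 'I_n -> nat) (F : 'I_(\sum_i p_ i) -> R) :
  \sum_p F p = \sum_s \sum_(j < p_ s) F (tagnat.Rank s j).
Proof.
rewrite sig_big_dep /= (reindex (@tagnat.rank n p_)) /=; last first.
  by exists tagnat.sig => x _; [apply: tagnat.rankK | apply: tagnat.sigK].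
by apply: eq_bigr => -[s j] _.
Qed.

Lemma unvec_omega_star k (Ns : 'I_k -> nat) M (w : 'I_k -> 'cV[R]_M) :
  unvec (omega_star Ns w) = \mxcol_s (const_mx 1 *m (w s)^T : 'M_(Ns s, M)).
Proof.
apply/matrixP => i c; rewrite -[i]tagnat.sig2K.
move: (tagnat.sig1 i) (tagnat.sig2 i) => s j.
rewrite mxcol_Rank mxE castmxE /=.
have -> : cast_ord (esym (cast_sum_mul Ns M)) (mxtens_index (tagnat.Rank s j, c))
    = @tagnat.Rank k (fun s => (Ns s * M)%N) s (mxtens_index (j, c)).
  apply: val_inj.
  change (tagnat.Rank s j * M + c = @tagnat.Rank k (fun s => (Ns s * M)%N) s
    (mxtens_index (j, c)) :> nat)%N.
  by rewrite !tagnat.RankEsum /= mulnDl big_distrl /= addnA.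
rewrite (ord1 (cast_ord _ _)).
rewrite (mxcol_Rank (fun s0 => kron (const_mx 1 : 'cV[R]_(Ns s0)) (w s0))).
have -> : (0 : 'I_1) = mxtens_index (0 : 'I_1, 0 : 'I_1) by apply: val_inj.
by rewrite !mxE !mxtens_indexK /= big_ord1 !mxE mul1r.
Qed.

Lemma mxdiag_stochastic_fix_omega_star k (Ns : 'I_k -> nat) M
    (As : forall s, 'M[R]_(Ns s)) (w : 'I_k -> 'cV[R]_M) :
  (forall s, left_stochastic (As s)) ->
  (\mxdiag_s As s)^T *m unvec (omega_star Ns w) = unvec (omega_star Ns w).
Proof.
move=> As_st; rewrite unvec_omega_star tr_mxdiag mul_mxdiag_mxcol.
by apply: eq_mxcol => s; rewrite mulmxA (proj2 (As_st s)).
Qed.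

End Blocks.

Section Substochastic.
Variables (R : realFieldType) (n : nat) (T : 'M[R]_n).
Hypothesis T_ge0 : nonnegmx T.

Lemma mxpow_gt0_pred_closed (S : pred 'I_n) :
  (forall i l, S l -> 0 < T i l -> S i) ->
  forall k i j, S j -> 0 < mxpow T k i j -> S i.
Proof.
move=> S_closed; elim=> [|k IHk] i j Sj.
  by rewrite /mxpow /= mxE; case: eqP => [->|]; rewrite ?ltxx.
rewrite /mxpow /= -/(mxpow T k) mxE => sum_gt0.
have [l _ Til_gt0] : exists2 l, true & 0 < T i l * mxpow T k l j.
  apply/exists_inP; apply: contraLR sum_gt0; rewrite negb_exists_in => /forall_inP H.
  by rewrite -leNgt; apply: sumr_le0 => l _; rewrite leNgt; apply: H.
have Til : 0 < T i l.
  by rewrite lt0r T_ge0 andbT; apply: contraTneq Til_gt0 => ->; rewrite mul0r ltxx.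
apply: (S_closed _ _ _ Til); apply: IHk Sj _.
by rewrite -(pmulr_rgt0 _ Til).
Qed.

Hypothesis T_colsum_le1 : forall q, \sum_p T p q <= 1.

(* Along a column q where |v| is maximal, m = |v_q| <= sum_p |v_p| T_pq
   <= m sum_p T_pq <= m, and the equalities pin down the column. *)
Lemma fixed_maxnorm_column (v : 'rV[R]_n) (m : R) q :
  v *m T = v -> (forall p, `|v 0 p| <= m) -> `|v 0 q| = m -> 0 < m ->
  \sum_p T p q = 1 /\ (forall p, 0 < T p q -> `|v 0 p| = m).
Proof.
move=> vT v_le vq m_gt0.
have m_le : m <= \sum_p `|v 0 p| * T p q.
  rewrite -vq -{1}vT mxE; apply: le_trans (ler_norm_sum _ _ _) _.
  by apply: ler_sum => p _; rewrite normrM (ger0_norm (T_ge0 p q)).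
have gap_ge0 p : 0 <= T p q * (m - `|v 0 p|) by rewrite mulr_ge0 ?subr_ge0.
have gap_sum : \sum_p T p q * (m - `|v 0 p|) =
    m * \sum_p T p q - \sum_p `|v 0 p| * T p q.
  rewrite mulr_sumr -sumrB; apply: eq_bigr => p _.
  by rewrite mulrBr (mulrC m) (mulrC `|v 0 p|).
have sum_gap_ge0 : 0 <= \sum_p T p q * (m - `|v 0 p|) by apply: sumr_ge0.
have colq : \sum_p T p q = 1.
  apply/eqP; rewrite eq_le T_colsum_le1 /= -(ler_pM2l m_gt0) mulr1.
  by apply: le_trans m_le _; rewrite -subr_ge0 -gap_sum.
split=> // p Tpq.
have gap0 : \sum_p T p q * (m - `|v 0 p|) = 0.
  by apply/eqP; rewrite eq_le sum_gap_ge0 andbT gap_sum colq mulr1 subr_le0.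
have /eqP := @psumr_eq0P _ _ _ _ (fun p _ => gap_ge0 p) gap0 p isT.
by rewrite mulf_eq0 (gt_eqF Tpq) subr_eq0 eq_sym => /eqP.
Qed.

End Substochastic.

Section BlockTriangular.
Variables (R : realFieldType) (k : nat) (NR : 'I_k -> nat).
Variable B : forall i j : 'I_k, 'M[R]_(NR i, NR j).
Hypothesis B_ge0 : forall i j, nonnegmx (B i j).
Hypothesis B_upper : forall i j : 'I_k, (j < i)%N -> B i j = 0.
Hypothesis B_irreducible : forall r, irreducible (B r r).
Hypothesis B_deficient : forall r, exists c, \sum_i B r r i c < 1.

Let T := \mxblock_(i, j) B i j.

Lemma mxblock_ge0 : nonnegmx T.
Proof. by move=> p q; rewrite /T mxE; apply: B_ge0. Qed.

(* A set of indices in the lowest block it meets contains that whole block, by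
   irreducibility; the deficient column of the block then sums to less than one,
   since by triangularity it has no entries in lower blocks. *)
Lemma mxblock_no_stochastic_closed_set (S : pred 'I_(\sum_i NR i)) :
  (forall q, S q -> \sum_p T p q = 1 /\ (forall p, 0 < T p q -> S p)) ->
  forall q, ~~ S q.
Proof.
move=> S_closed q0; apply/negP => Sq0.
pose meets b := [exists q, S q && (tagnat.sig1 q == b :> nat)].
have meets_q0 : exists b, meets b.
  by exists (tagnat.sig1 q0); apply/existsP; exists q0; rewrite Sq0 /=.
case: (ex_minnP meets_q0) => b /existsP [q1 /andP [Sq1 /eqP q1b]] b_min.
set r := tagnat.sig1 q1.
have S_above p : S p -> (r <= tagnat.sig1 p)%N.
  by move=> Sp; rewrite /r q1b; apply: b_min; apply/existsP; exists p; rewrite Sp eqxx.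
have S_block i : S (tagnat.Rank r i).
  have [Brr_ge0 /(_ i (tagnat.sig2 q1)) [e Brr_e]] := B_irreducible r.
  apply: (@mxpow_gt0_pred_closed _ _ _ Brr_ge0 [pred i | S (tagnat.Rank r i)] _
    e i (tagnat.sig2 q1) _ Brr_e).
    by move=> i' l Sl Bpos; apply: (S_closed _ Sl).2; rewrite /T mxblock_Rank.
  by rewrite /= tagnat.sig2K.
have [c Bc] := B_deficient r.
have [col1 col_closed] := S_closed _ (S_block c).
have col_off p : tagnat.sig1 p != r -> T p (tagnat.Rank r c) = 0.
  move=> pr; apply/eqP; apply: contraNT pr => Tp_neq0.
  have Tp_gt0 : 0 < T p (tagnat.Rank r c) by rewrite lt0r Tp_neq0 mxblock_ge0.
  apply/eqP/val_inj/eqP; rewrite eqn_leq S_above ?col_closed // andbT leqNgt.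
  apply/negP => r_lt; move: Tp_neq0.
  by rewrite -[p]tagnat.sig2K /T mxblock_Rank B_upper // mxE eqxx.
suff : \sum_p T p (tagnat.Rank r c) = \sum_i B r r i c.
  by rewrite col1 => Bc1; move: Bc; rewrite -Bc1 ltxx.
rewrite sum_Rank (bigD1 r) //= [X in _ + X]big1 ?addr0.
  by apply: eq_bigr => i _; rewrite /T mxblock_Rank.
by move=> s sr; apply: big1 => i _; apply: col_off; rewrite tagnat.Rank1K.
Qed.

Lemma mxblock_substochastic_unitmx :
  (forall q, \sum_p T p q <= 1) -> (1%:M - T) \in unitmx.
Proof.
move=> T_colsum_le1; rewrite unitmxE unitfE; apply/negP => /det0P [v v_neq0 v_ker].
have vT : v *m T = v.
  by apply/eqP; rewrite eq_sym -subr_eq0 -[X in X - _]mulmx1 -mulmxBr v_ker.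
have [p0 vp0] : exists p0, v 0 p0 != 0.
  apply/existsP; apply: contraNT v_neq0; rewrite negb_exists => /forallP v0.
  by apply/eqP/matrixP => i q; rewrite [i]ord1 mxE; apply/eqP/negbNE/v0.
have [pm _ pm_max] := @arg_maxP _ _ _ p0 xpredT (fun p => `|v 0 p|) isT.
have m_gt0 : 0 < `|v 0 pm| by apply: lt_le_trans (pm_max p0 isT); rewrite normr_gt0.
pose S := [pred p | `|v 0 p| == `|v 0 pm|].
have S_closed q : S q -> \sum_p T p q = 1 /\ (forall p, 0 < T p q -> S p).
  move=> /eqP vq; have [col1 col_closed] := fixed_maxnorm_column mxblock_ge0
    T_colsum_le1 vT (fun p => pm_max p isT) vq m_gt0.
  by split=> // p /col_closed /= ->.
by move: (mxblock_no_stochastic_closed_set S_closed pm); rewrite /= eqxx.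
Qed.

End BlockTriangular.

Lemma stochastic_block_upper_colsum_le1 (R : realFieldType) n1 n2
    (P : 'M[R]_n1) (Q : 'M[R]_(n1, n2)) (T : 'M[R]_n2) :
  left_stochastic (block_mx P Q 0 T) -> forall q, \sum_p T p q <= 1.
Proof.
set A := block_mx P Q 0 T; move=> [A_ge0 /matrixP colsum] q.
have entry i j : A^T i j * const_mx 1 j 0 = A j i.
  by rewrite [A^T _ _]mxE [const_mx _ _ _]mxE mulr1.
move: (colsum (rshift n1 q) 0); rewrite mxE big_split_ord /=.
under eq_bigr do rewrite entry /A block_mxEur.
under [X in _ + X = _]eq_bigr do rewrite entry /A block_mxEdr.
rewrite mxE => <-; rewrite lerDr; apply: sumr_ge0 => i _.
by have := A_ge0 (lshift n2 i) (rshift n1 q); rewrite block_mxEur.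
Qed.

Lemma affine_fixpointE (R : comUnitRingType) m n k (T : 'M[R]_n)
    (P : 'M[R]_(m, n)) (X : 'M[R]_(m, k)) (Y : 'M[R]_(n, k)) :
  (1%:M - T) \in unitmx ->
  Y = P^T *m X + T^T *m Y <-> Y = (P *m invmx (1%:M - T))^T *m X.
Proof.
move=> unitT; have unitTt : (1%:M - T)^T \in unitmx by rewrite unitmx_tr.
apply: (@iff_trans _ ((1%:M - T)^T *m Y = P^T *m X)).
  rewrite linearB /= trmx1 mulmxBl mul1mx.
  by split=> [{1}-> | <-]; rewrite ?addrK ?subrK.
rewrite trmx_mul trmx_inv -mulmxA.
by split=> [<- | ->]; rewrite ?mulKmx ?mulKVmx.
Qed.

Theorem lemma2 (R : realFieldType) (M Sn Rn : nat)
  (NS : 'I_Sn -> nat) (NR : 'I_Rn -> nat)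
  (As : forall s : 'I_Sn, 'M[R]_(NS s))
  (TSR : 'M[R]_(\sum_(s < Sn) NS s, \sum_(r < Rn) NR r))
  (B : forall i j : 'I_Rn, 'M[R]_(NR i, NR j))
  (w : 'I_Sn -> 'cV[R]_M) :
  (0 < Sn)%N ->
  (forall s, 0 < NS s)%N ->
  (forall r, 0 < NR r)%N ->
  (forall s, left_stochastic (As s)) ->
  (forall s, primitive (As s)) ->
  nonnegmx TSR ->
  (forall i j, nonnegmx (B i j)) ->
  (forall i j : 'I_Rn, (j < i)%N -> B i j = 0) ->
  (forall r, irreducible (B r r)) ->
  (forall r, exists k, \sum_i B r r i k < 1) ->
  let TSS := \mxdiag_(s < Sn) As s in
  let TRR := \mxblock_(i < Rn, j < Rn) B i j in
  let A := block_mx TSS TSR 0 TRR in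
  left_stochastic A ->
  let W := TSR *m invmx (1%:M - TRR) in
  let calA := kron A (1%:M : 'M[R]_M) in
  let calW := kron W (1%:M : 'M[R]_M) in
  let om_star := omega_star NS w in
  let om_bullet := calW^T *m om_star in
  let om_inf := col_stack om_star om_bullet in
  om_inf = calA^T *m om_inf /\
  prefix_eq om_inf om_star /\
  (forall x : 'cV[R]_((\sum_(s < Sn) NS s + \sum_(r < Rn) NR r) * M),
     x = calA^T *m x -> prefix_eq x om_star -> x = om_inf).
Proof.
move=> _ _ _ As_st _ _ B_ge0 B_upper B_irr B_def TSS TRR A A_st W calA calW
  om_star om_bullet om_inf.
have unitTRR : (1%:M - TRR) \in unitmx.
  exact: mxblock_substochastic_unitmx B_ge0 B_upper B_irr B_def
    (stochastic_block_upper_colsum_le1 A_st).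
have TSS_fix : TSS^T *m unvec om_star = unvec om_star.
  exact: mxdiag_stochastic_fix_omega_star.
have bulletE : unvec om_bullet = W^T *m unvec om_star by apply: unvec_trkron1_mul.
split.
  apply: unvec_inj; rewrite unvec_kron1_block_upper unvec_col_stack TSS_fix bulletE.
  by congr col_mx; apply/(affine_fixpointE _ _ _ unitTRR).
split; first exact: prefix_eq_col_stack.
move=> x x_fix x_pre; have [u [d xE]] := col_stackP x.
rewrite xE in x_fix x_pre *; rewrite (prefix_eq_col_stackE x_pre) in x_fix *.
move/(congr1 (@unvec _ _ _)): x_fix.
rewrite unvec_kron1_block_upper unvec_col_stack TSS_fix => /eq_col_mx [_ d_fix].
congr col_stack; apply: unvec_inj; rewrite bulletE.
exact/(affine_fixpointE _ _ _ unitTRR).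
Qed.
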